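(* Let $p$ be a prime and let $c,e,j$ be residues mod $p$ with $c\notin\{0,1\}$, $j\notin\{0,1\}$ and $e\notin\{0,\,j,\,c,\,c+j-1,\,jc\}$. Let $m\ge 2$ be an integer dividing $p-1$. Define \[ F(x)=\frac{1-jx}{1-j},\qquad G(x)=\frac{e-xjc}{e-jc},\qquad H(x)=\frac{xj(1-c)+e-j}{e-jc}. \] Suppose there is $x\not\equiv 0$ which is an $m$th power mod $p$ such that $F(x)$ is a non-zero $m$th power mod $p$, and neither $G(x)$ nor $H(x)$ is a non-zero $m$th power mod $p$. Then the three cyclic transversals generated by $0\circ 0=0$, $0\circ 1=j$ and $0\circ c=e$, i.e. the partial latin square \[ \{(i,i,i),\ (i,1+i,j+i),\ (i,c+i,e+i)\mid 0\le i<p\}, \] can be completed to a diagonally cyclic latin square of order $p$.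
   Context: Triples $(r,s,t)$ denote symbol $t$ in row $r$, column $s$; all indices are modulo $p$. A latin square with operation $\circ$ of odd order $n$ is diagonally cyclic if $i\circ j=k$ implies $(i+1)\circ(j+1)=k+1$ for all cells. A partial latin square is completed by a latin square if it is contained in it (as a set of triples). *)

From HB Require Import structures.
From mathcomp Require Import all_boot all_order all_algebra.
Set Implicit Arguments. Unset Strict Implicit. Unset Printing Implicit Defensive.
Import GRing.Theory.
Local Open Scope ring_scope.

Definition is_mth_power (R : ringType) (m : nat) (x : R) : Prop :=
  exists y : R, y ^+ m = x.

Definition is_nz_mth_power (R : ringType) (m : nat) (x : R) : Prop :=
  x != 0 /\ is_mth_power m x.

(* A latin square with rows, columns and symbols indexed by the finite type T:
   L r s is the symbol in row r, column s; every row and every column contains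
   each symbol exactly once (injectivity suffices on a finite type). *)
Definition latin_square (T : finType) (L : T -> T -> T) : Prop :=
  (forall r, injective (L r)) /\ (forall s, injective (fun r => L r s)).

Definition diag_cyclic (R : finRingType) (L : R -> R -> R) : Prop :=
  forall r s, L (r + 1) (s + 1) = L r s + 1.

Definition completes (T : finType) (P : T -> T -> T -> Prop) (L : T -> T -> T) : Prop :=
  forall r s t, P r s t -> L r s = t.

(* A diagonally cyclic latin square of odd order over Z/pZ is the same thing
   as an orthomorphism f of Z/pZ: a permutation f such that y |-> f y - y is a
   permutation too; the square is L r s = r + f (s - r), and it contains the
   cyclic transversals generated by 0∘0 = 0, 0∘1 = j, 0∘c = e as soon as
   f 0 = 0, f 1 = j and f c = e.

   The orthomorphism is built from a two-piece linear map
       h z = a z if z/k lies in S,    h z = j z otherwise,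
   where S is the subgroup of non-zero m-th powers, a = j x and
   k = (e - j c) / (j (x - 1)).  Because a/j = x and (a - 1)/(j - 1) = F(x)
   lie in S, both h and z |-> h z - z are injective; so is the translate
   f y = h (y + u) - h u with u = k - c.  The hypotheses on G(x) and H(x) say
   precisely that u/k and (1 + u)/k are not in S, which forces f 1 = j, while
   k/k = 1 lies in S and gives f c = e. *)
From HB Require Import structures.
From mathcomp Require Import all_boot all_order all_algebra.
From mathcomp Require Import ring.
Set Implicit Arguments. Unset Strict Implicit. Unset Printing Implicit Defensive.
Import GRing.Theory.
Local Open Scope ring_scope.

Definition orthomorphism (R : zmodType) (f : R -> R) : Prop :=
  injective f /\ injective (fun y => f y - y).

Lemma orthomorphism_translate (R : zmodType) (h : R -> R) (u : R) :
  orthomorphism h -> orthomorphism (fun y => h (y + u) - h u).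
Proof.
move=> [h_inj hsub_inj]; split=> [y1 y2 /addIr /h_inj /addIr // | y1 y2 /= E].
have split_sub w : h (w + u) - (w + u) = (h (w + u) - h u - w) + (h u - u).
  by rewrite [RHS]addrACA subrK opprD.
by apply/(addIr u)/hsub_inj; rewrite /= !split_sub E.
Qed.

Section OrthomorphismSquare.
Variables (R : finNzRingType) (f : R -> R).

Definition orth_square (r s : R) : R := r + f (s - r).

Lemma orth_square_latin : orthomorphism f -> latin_square orth_square.
Proof.
move=> [f_inj fsub_inj]; split=> [r s1 s2 /addrI /f_inj /addIr // | s r1 r2 E].
have col_val r : orth_square r s = s + (f (s - r) - (s - r)).
  by rewrite /orth_square opprB addrCA subrKC addrC.
move: E; rewrite !col_val => /addrI /fsub_inj /addrI /oppr_inj //.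
Qed.

Lemma orth_square_diag_cyclic : diag_cyclic orth_square.
Proof. by move=> r s; rewrite /orth_square opprD addrACA subrr addr0 addrAC. Qed.

Lemma orth_square_completes (c e j : R) :
  f 0 = 0 -> f 1 = j -> f c = e ->
  completes (fun r s t => exists i : R,
               [\/ (r, s, t) = (i, i, i),
                   (r, s, t) = (i, 1 + i, j + i) |
                   (r, s, t) = (i, c + i, e + i)]) orth_square.
Proof.
move=> f0 f1 fc r s t [i [] [-> -> ->]]; rewrite /orth_square ?addrK ?subrr;
  by rewrite ?f0 ?f1 ?fc ?addr0 // addrC.
Qed.

End OrthomorphismSquare.

Section TwoPieceLinear.
Variables (F : fieldType) (S : pred F).
Hypothesis mulS : forall a b, S a -> S b -> S (a * b).

Definition two_piece (k al be : F) (z : F) : F :=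
  if S (z / k) then al * z else be * z.

(* If al / be lies in S, the two pieces have disjoint images. *)
Lemma two_piece_inj (k al be : F) :
  al != 0 -> be != 0 -> S (al / be) -> injective (two_piece k al be).
Proof.
move=> al0 be0 Salbe.
have mixed w1 w2 : S (w1 / k) -> ~~ S (w2 / k) -> al * w1 != be * w2.
  move=> Sw1 Sw2; apply: contraNneq Sw2 => E.
  have -> : w2 = al / be * w1 by rewrite mulrAC E mulrAC divff // mul1r.
  by rewrite -(mulrA (al / be)); apply: mulS.
rewrite /two_piece => z1 z2.
case S1 : (S (z1 / k)); case S2 : (S (z2 / k)) => E; try exact: mulfI E.
- by exfalso; move/eqP: E; apply/negP/mixed; rewrite ?S1 ?S2.
- by exfalso; move/esym/eqP: E; apply/negP/mixed; rewrite ?S1 ?S2.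
Qed.

Lemma two_piece_subid (k al be z : F) :
  two_piece k al be z - z = two_piece k (al - 1) (be - 1) z.
Proof. by rewrite /two_piece; case: ifP; rewrite mulrBl mul1r. Qed.

Lemma two_piece_orthomorphism (k al be : F) :
  al != 0 -> be != 0 -> S (al / be) ->
  al - 1 != 0 -> be - 1 != 0 -> S ((al - 1) / (be - 1)) ->
  orthomorphism (two_piece k al be).
Proof.
move=> al0 be0 Salbe al10 be10 Salbe1; split; first exact: two_piece_inj.
by move=> z1 z2 /=; rewrite !two_piece_subid => /two_piece_inj; apply.
Qed.

End TwoPieceLinear.

Section ThreeCellOrthomorphism.
Variables (F : fieldType) (S : pred F).
Hypotheses (mulS : forall a b, S a -> S b -> S (a * b)) (S1 : S 1) (notS0 : ~~ S 0).
Variables (c e j x : F).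
Hypotheses (j0 : j != 0) (j1 : j != 1) (ejc : e != j * c) (x0 : x != 0).
Hypotheses (Sx : S x) (SF : S ((1 - j * x) / (1 - j))).
Hypotheses (notSG : ~~ S ((e - x * j * c) / (e - j * c)))
           (notSH : ~~ S ((x * j * (1 - c) + e - j) / (e - j * c))).

Let k : F := (e - j * c) / (j * (x - 1)).
Let u : F := k - c.
Let h : F -> F := two_piece S k (j * x) j.
Let f (y : F) : F := h (y + u) - h u.

Let ejc0 : e - j * c != 0. Proof. by rewrite subr_eq0. Qed.

(* G(1) = 1 lies in S, so x differs from 1. *)
Let x10 : x - 1 != 0.
Proof.
rewrite subr_eq0; apply: contraNneq notSG => ->.
by rewrite mul1r divff.
Qed.

(* The hypotheses on G(x) and H(x) say that u and 1 + u avoid the class k S. *)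
Let u_class : u / k = (e - x * j * c) / (e - j * c).
Proof. by rewrite /u /k; field; rewrite ejc0 x10 j0. Qed.

Let u1_class : (1 + u) / k = (x * j * (1 - c) + e - j) / (e - j * c).
Proof. by rewrite /u /k; field; rewrite ejc0 x10 j0. Qed.

Let value_at_c : j * x * k - j * u = e.
Proof. by rewrite /u /k; field; rewrite x10 j0. Qed.

Let h_orthomorphism : orthomorphism h.
Proof.
have jx1 : j * x - 1 != 0.
  apply: contraNneq notS0 => jx1; move: SF.
  by rewrite -opprB jx1 oppr0 mul0r.
apply: two_piece_orthomorphism => //; rewrite ?mulf_neq0 ?subr_eq0 //.
  by rewrite mulrAC divff // mul1r.
by rewrite -(opprB 1) -(opprB 1 j) invrN mulrNN.
Qed.

Lemma three_cell_orthomorphism :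
  exists f : F -> F, [/\ orthomorphism f, f 0 = 0, f 1 = j & f c = e].
Proof.
have hu : h u = j * u by rewrite /h /two_piece u_class (negbTE notSG).
exists f; split; first exact: orthomorphism_translate.
- by rewrite /f add0r subrr.
- by rewrite /f hu /h /two_piece u1_class (negbTE notSH) mulrDr mulr1 addrK.
- rewrite /f hu /h /two_piece (_ : c + u = k) ?divff ?S1 ?value_at_c //.
    by rewrite mulf_neq0 ?invr_neq0 // mulf_neq0.
  by rewrite /u addrC subrK.
Qed.

End ThreeCellOrthomorphism.

Definition nz_mth_powerb (F : finFieldType) (m : nat) (z : F) : bool :=
  (z != 0) && [exists y, y ^+ m == z].

Lemma nz_mth_powerbP (F : finFieldType) (m : nat) (z : F) :
  reflect (is_nz_mth_power m z) (nz_mth_powerb m z).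
Proof.
apply: (iffP andP) => [[z0 /existsP [y /eqP yz]] | [z0 [y yz]]].
  by split => //; exists y.
by split => //; apply/existsP; exists y; rewrite yz.
Qed.

Lemma nz_mth_powerbM (F : finFieldType) (m : nat) (a b : F) :
  nz_mth_powerb m a -> nz_mth_powerb m b -> nz_mth_powerb m (a * b).
Proof.
move=> /andP [a0 /existsP [y /eqP ya]] /andP [b0 /existsP [z /eqP zb]].
apply/andP; split; first by rewrite mulf_neq0.
by apply/existsP; exists (y * z); rewrite exprMn ya zb.
Qed.

Lemma nz_mth_powerb1 (F : finFieldType) (m : nat) : nz_mth_powerb m (1 : F).
Proof. by rewrite /nz_mth_powerb oner_neq0; apply/existsP; exists 1; rewrite expr1n. Qed.

Lemma nz_mth_powerb0 (F : finFieldType) (m : nat) : ~~ nz_mth_powerb m (0 : F).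
Proof. by rewrite /nz_mth_powerb eqxx. Qed.

Theorem lemma4 (p : nat) (hp : prime p) (c e j : 'F_p) (m : nat)
  (hc0 : c != 0) (hc1 : c != 1) (hj0 : j != 0) (hj1 : j != 1)
  (he0 : e != 0) (hej : e != j) (hec : e != c) (hecj : e != c + j - 1)
  (hejc : e != j * c)
  (hm2 : (2 <= m)%N) (hmdvd : (m %| p.-1)%N)
  (hx : exists x : 'F_p,
      [/\ x != 0, is_mth_power m x,
          is_nz_mth_power m ((1 - j * x) / (1 - j)),
          ~ is_nz_mth_power m ((e - x * j * c) / (e - j * c)) &
          ~ is_nz_mth_power m ((x * j * (1 - c) + e - j) / (e - j * c))]) :
  exists L : 'F_p -> 'F_p -> 'F_p,
    [/\ latin_square L, diag_cyclic L &
        completes (fun r s t => exists i : 'F_p,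
                     [\/ (r, s, t) = (i, i, i),
                         (r, s, t) = (i, 1 + i, j + i) |
                         (r, s, t) = (i, c + i, e + i)]) L].
Proof.
case: hx => x [x0 xpow /nz_mth_powerbP SF /nz_mth_powerbP notSG /nz_mth_powerbP notSH].
have Sx : nz_mth_powerb m x by apply/nz_mth_powerbP; split.
have [f [f_orth f0 f1 fc]] :=
  three_cell_orthomorphism (@nz_mth_powerbM _ m) (nz_mth_powerb1 _ m)
    (nz_mth_powerb0 _ m) hj0 hj1 hejc x0 Sx SF notSG notSH.
exists (orth_square f); split.
- exact: orth_square_latin.
- exact: orth_square_diag_cyclic.
- exact: orth_square_completes.
Qed.
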